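(* Let $G$ be a $4$-vertex-critical graph, and suppose $C$ is an induced cycle of $G$ such that every vertex of $C$ has degree exactly three in $G$. Then $C$ has odd length, and there is a $3$-coloring of $G-V(C)$ under which every vertex of the set $\left(\bigcup_{c \in V(C)} N_G(c)\right) \setminus V(C)$ receives the same color.
   Context: A $k$-coloring of a graph $G$ is a map $c:V(G)\to\{1,\dots,k\}$ with $c(x)\neq c(y)$ for every edge $xy$. A graph is $k$-chromatic if it is $k$-colorable but not $(k-1)$-colorable. A graph $G$ is $k$-vertex-critical if it is $k$-chromatic and every proper induced subgraph of $G$ is $(k-1)$-colorable. $G-V(C)$ is the subgraph induced by $V(G)\setminus V(C)$; $N_G(c)$ is the neighborhood of $c$ in $G$. *)

From mathcomp Require Import all_boot.
Set Implicit Arguments. Unset Strict Implicit. Unset Printing Implicit Defensive.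

Definition simple_graph (T : finType) (e : rel T) : Prop :=
  symmetric e /\ irreflexive e.

Definition proper_coloring_on (T : finType) (e : rel T) (k : nat)
    (S : {set T}) (c : T -> 'I_k) : Prop :=
  forall x y, x \in S -> y \in S -> e x y -> c x != c y.

Definition colorable_on (T : finType) (e : rel T) (k : nat) (S : {set T}) : Prop :=
  exists c : T -> 'I_k, proper_coloring_on e S c.

Definition k_colorable (T : finType) (e : rel T) (k : nat) : Prop :=
  colorable_on e k [set: T].

Definition k_chromatic (T : finType) (e : rel T) (k : nat) : Prop :=
  k_colorable e k /\ ~ k_colorable e k.-1.

Definition vertex_critical (T : finType) (e : rel T) (k : nat) : Prop :=
  k_chromatic e k /\
  forall S : {set T}, S \proper [set: T] -> colorable_on e k.-1 S.

Definition degree (T : finType) (e : rel T) (x : T) : nat := #|[set y | e x y]|.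

Definition induced_cycle (T : finType) (e : rel T) (s : seq T) : Prop :=
  [/\ uniq s, 3 <= size s, cycle e s &
      forall x y, x \in s -> y \in s -> e x y -> (y == next s x) || (y == prev s x)].

Definition outer_nbhd (T : finType) (e : rel T) (s : seq T) : {set T} :=
  [set y | [exists x : T, (x \in s) && e x y] & y \notin s].

From mathcomp Require Import all_boot.

Set Implicit Arguments. Unset Strict Implicit. Unset Printing Implicit Defensive.

(* Each vertex of C has exactly one neighbour outside C, so a 3-colouring c of
   G - V(C) forbids one colour at each vertex of C; the cycle then has lists of
   two colours.  A cycle with 2-lists taken from 3 colours is always
   colourable, except when all the lists coincide and the cycle is odd: if the
   forbidden colours are not all equal, start at a place where they change and
   colour greedily; if they are all equal and the cycle is even, alternate the
   other two colours.  Since G is not 3-colourable, c cannot be extended to C,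
   so C is odd and c is constant on the outer neighbourhood. *)

Section All2.
Variables (S T : Type) (r : S -> T -> bool).

Lemma all2_size s t : all2 r s t -> size s = size t.
Proof. by rewrite all2E => /andP[/eqP]. Qed.

Lemma all2_cat s1 s2 t1 t2 :
  all2 r s1 t1 -> all2 r s2 t2 -> all2 r (s1 ++ s2) (t1 ++ t2).
Proof. by elim: s1 t1 => [|x s1 IH] [|y t1] //= /andP[-> /IH]. Qed.

Lemma all2_cat_inv s t1 t2 : all2 r s (t1 ++ t2) ->
  exists s1 s2, [/\ s = s1 ++ s2, all2 r s1 t1 & all2 r s2 t2].
Proof.
elim: t1 s => [|y t1 IH] s; first by exists [::], s.
case: s => [|x s] //= /andP[rxy /IH[s1 [s2 [-> r1 r2]]]].
by exists (x :: s1), s2; rewrite /= rxy.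
Qed.

Lemma all2_map (I : Type) (f : I -> S) (g : I -> T) (s : seq I) :
  all2 r (map f s) (map g s) = all (fun i => r (f i) (g i)) s.
Proof. by elim: s => //= i s ->. Qed.

Lemma all2_nseq s y : all2 r s (nseq (size s) y) = all (r^~ y) s.
Proof. by elim: s => //= x s ->. Qed.

End All2.

Lemma nonconstant_split (T : eqType) (s : seq T) :
  ~~ constant s -> exists p q x y, s = rcons p x ++ y :: q /\ x != y.
Proof.
case: s => [|x s] //=; elim: s x => [|y s IH] x //=.
case: (eqVneq y x) => [-> /IH[p [q [x' [y' [-> x'y']]]]] | yx _].
- by exists (x :: p), q, x', y'.
- by exists [::], s, x, y; rewrite eq_sym.
Qed.

Lemma map_nth_index (T : eqType) (U : Type) (u0 : U) (s : seq T) (g : seq U) :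
  uniq s -> size g = size s -> map (fun x => nth u0 g (index x s)) s = g.
Proof.
move=> s_uniq g_size; apply: (@eq_from_nth _ u0) => [|i]; rewrite size_map // => i_lt.
have x0 : T by case: s i_lt {s_uniq g_size}.
by rewrite (nth_map x0) // index_uniq.
Qed.

Lemma next_neq_prev (T : eqType) (s : seq T) x :
  uniq s -> 2 < size s -> x \in s -> next s x != prev s x.
Proof.
move=> s_uniq s_gt2 /rot_to[i p s_rot].
rewrite -(next_rot i s_uniq) -(prev_rot i s_uniq) s_rot next_nth prev_nth mem_head.
have /andP[xNp p_uniq] : uniq (x :: p) by rewrite -s_rot rot_uniq.
rewrite index_head (memNindex xNp) -last_nth.
have : 2 < size (x :: p) by rewrite -s_rot size_rot.
case: p {s_rot xNp} p_uniq => [|y [|z q]] //= /andP[yNq _] _.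
by apply: contraNneq yNq => ->; apply: mem_last.
Qed.

Lemma cycle_iota_parity n : ~~ odd n -> cycle (fun i j => odd i != odd j) (iota 0 n).
Proof.
case: n => [//|n]; rewrite /= negbK rcons_path => n_odd.
have iota_path m k : path (fun i j => odd i != odd j) m (iota m.+1 k).
  by elim: k m => //= k IH m; rewrite IH andbT; case: odd.
have last_iota m k : last m (iota m.+1 k) = m + k.
  by elim: k m => [|k IH] m /=; rewrite ?addn0 // IH addnS.
by rewrite iota_path last_iota n_odd.
Qed.

Definition other_color (a b : 'I_3) : 'I_3 :=
  odflt a [pick w | (w != a) && (w != b)].

Lemma other_colorP a b : (other_color a b != a) && (other_color a b != b).
Proof.
rewrite /other_color; case: pickP => // none.
have := none (@Ordinal 3 0 isT); have := none (@Ordinal 3 1 isT).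
have := none (@Ordinal 3 2 isT).
by clear none; case: a b => [[|[|[|?]]] ?] [[|[|[|?]]] ?].
Qed.

Local Notation differ := (fun a b : 'I_3 => a != b).

Fixpoint greedy_coloring (a : 'I_3) (f : seq 'I_3) : seq 'I_3 :=
  if f is b :: f' then other_color a b :: greedy_coloring (other_color a b) f'
  else [::].

Lemma greedy_coloring_avoids a f : all2 differ (greedy_coloring a f) f.
Proof. by elim: f a => //= b f IH a; rewrite IH andbT; case/andP: (other_colorP a b). Qed.

Lemma greedy_coloring_path a f : path differ a (greedy_coloring a f).
Proof.
by elim: f a => //= b f IH a; rewrite IH andbT eq_sym; case/andP: (other_colorP a b).
Qed.

Lemma last_greedy_coloring a b f : last a (greedy_coloring a (rcons f b)) != b.
Proof. by elim: f a => [|b' f IH] a /=; [case/andP: (other_colorP a b) | apply: IH]. Qed.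

(* Colouring the first vertex with the colour forbidden at the last one lets
   the greedy path close up. *)
Lemma greedy_cyclic_colors (x y : 'I_3) f : x != y ->
  exists2 g, all2 differ g (y :: rcons f x) & cycle differ g.
Proof.
move=> xy; exists (x :: greedy_coloring x (rcons f x)).
  by rewrite /= xy greedy_coloring_avoids.
by rewrite /= rcons_path greedy_coloring_path last_greedy_coloring.
Qed.

Lemma alternating_cyclic_colors b n : ~~ odd n ->
  exists2 g, all2 differ g (nseq n b) & cycle differ g.
Proof.
move=> n_even; have /andP[ab _] := other_colorP b b.
have /andP[cb ca] := other_colorP b (other_color b b).
set a := other_color b b in ab cb ca *; set c := other_color b a in cb ca *.
pose alt i := if odd i then c else a.
exists (map alt (iota 0 n)).
  rewrite -[X in nseq X _](size_iota 0 n) -(size_map alt) all2_nseq all_map.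
  by apply/allP => i _; rewrite /= /alt; case: odd.
rewrite cycle_map; apply: sub_cycle (cycle_iota_parity n_even) => i j /=.
by rewrite /alt; case: odd; case: odd => // _; rewrite // eq_sym.
Qed.

Lemma avoiding_cyclic_colors (f : seq 'I_3) : ~~ (constant f && odd (size f)) ->
  exists2 g, all2 differ g f & cycle differ g.
Proof.
have [/(constantP ord0)[b f_eq] | f_nonconst] := boolP (constant f).
  by rewrite f_eq size_nseq; apply: alternating_cyclic_colors.
move=> _; have [p [q [x [y [-> xy]]]]] := nonconstant_split f_nonconst.
have [g g_avoid g_cycle] := greedy_cyclic_colors (q ++ p) xy.
move: g_avoid; rewrite rcons_cat -cat_cons => /all2_cat_inv[g1 [g2 [g_cat g1_ok g2_ok]]].
exists (g2 ++ g1); first exact: all2_cat.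
by rewrite cycle_catC -g_cat.
Qed.

Lemma avoiding_cycle_coloring (T : eqType) (s : seq T) (F : T -> 'I_3) :
  uniq s -> ~~ (constant (map F s) && odd (size s)) ->
  exists h : T -> 'I_3, {in s, forall x, h x != F x} /\ cycle (relpre h differ) s.
Proof.
rewrite -(size_map F) => s_uniq /avoiding_cyclic_colors[g g_avoid g_cycle].
have g_size : size g = size s by rewrite (all2_size g_avoid) size_map.
pose h x := nth ord0 g (index x s); have g_eq : map h s = g by apply: map_nth_index.
exists h; split; last by rewrite -cycle_map g_eq.
by move: g_avoid; rewrite -g_eq all2_map => /allP.
Qed.

Section Coloring.
Variables (T : finType) (e : rel T).

Lemma proper_coloring_glue k (A : {set T}) (c1 c2 : T -> 'I_k) :
  symmetric e -> proper_coloring_on e A c1 -> proper_coloring_on e (~: A) c2 ->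
  (forall x y, x \in A -> y \notin A -> e x y -> c1 x != c2 y) ->
  k_colorable e k.
Proof.
move=> e_sym c1_ok c2_ok across.
exists (fun x => if x \in A then c1 x else c2 x) => x y _ _ exy.
have [xA | xNA] := boolP (x \in A); have [yA | yNA] := boolP (y \in A).
- exact: c1_ok.
- exact: across.
- by rewrite eq_sym across // e_sym.
- by apply: c2_ok; rewrite ?inE.
Qed.

Lemma induced_cycle_coloring k (s : seq T) (h : T -> 'I_k) :
  (forall x y, x \in s -> y \in s -> e x y -> (y == next s x) || (y == prev s x)) ->
  cycle [rel x y | h x != h y] s -> proper_coloring_on e [set x in s] h.
Proof.
move=> s_induced h_cycle x y; rewrite !inE => xs ys /(s_induced _ _ xs ys) /orP[] /eqP ->.
- exact: (next_cycle h_cycle xs).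
- by rewrite eq_sym; exact: (prev_cycle h_cycle xs).
Qed.

Lemma critical_colorable_setC k (A : {set T}) :
  vertex_critical e k -> A != set0 -> colorable_on e k.-1 (~: A).
Proof.
by move=> [_ critical] A_neq0; apply: critical; rewrite properT -setC0 (inj_eq (@setC_inj _)).
Qed.

Lemma cycle_outer_neighbor_unique (s : seq T) x y z :
  symmetric e -> uniq s -> 2 < size s -> cycle e s -> x \in s -> degree e x <= 3 ->
  y \notin s -> z \notin s -> e x y -> e x z -> y = z.
Proof.
move=> e_sym s_uniq s_gt2 s_cycle xs deg_x ys zs exy exz; apply/eqP.
apply: contraTT deg_x => yz; rewrite -ltnNge.
have nxs : next s x \in s by rewrite mem_next.
have pxs : prev s x \in s by rewrite mem_prev.
have nbrs_uniq : uniq [:: next s x; prev s x; y; z].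
  by rewrite /= !inE !negb_or next_neq_prev // yz !(memPn ys) ?(memPn zs).
have <- : #|[:: next s x; prev s x; y; z]| = 4 := card_uniqP nbrs_uniq.
apply/subset_leq_card/subsetP => w.
rewrite !inE => /or4P[] /eqP -> //.
- exact: next_cycle.
- by rewrite e_sym prev_cycle.
Qed.

Definition outer_color (s : seq T) (c : T -> 'I_3) x : 'I_3 :=
  if [pick y | e x y & y \notin s] is Some y then c y else ord0.

Lemma outer_colorE (s : seq T) (c : T -> 'I_3) x y :
  (forall z z', z \notin s -> z' \notin s -> e x z -> e x z' -> z = z') ->
  y \notin s -> e x y -> outer_color s c x = c y.
Proof.
move=> outer_unique ys exy; rewrite /outer_color.
case: pickP => [z /andP[exz zs] | /(_ y)]; first by rewrite (outer_unique z y).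
by rewrite exy ys.
Qed.

End Coloring.

Theorem lemma5 (T : finType) (e : rel T) (s : seq T) :
  simple_graph e ->
  vertex_critical e 4 ->
  induced_cycle e s ->
  (forall x, x \in s -> degree e x = 3) ->
  odd (size s) /\
  exists c : T -> 'I_3,
    proper_coloring_on e (~: [set x in s]) c /\
    exists a : 'I_3, forall y, y \in outer_nbhd e s -> c y = a.
Proof.
move=> [e_sym _] critical [s_uniq s_gt2 s_cycle s_induced] deg3.
have [c c_ok] : colorable_on e 3 (~: [set x in s]).
  apply: critical_colorable_setC critical _; apply/set0Pn.
  by case: s s_gt2 {s_uniq s_cycle s_induced deg3} => // x s _; exists x; rewrite inE mem_head.
pose F := outer_color e s c.
have F_ok x y : x \in s -> y \notin s -> e x y -> F x = c y.
  move=> xs; apply: outer_colorE => z z'.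
  by apply: cycle_outer_neighbor_unique; rewrite ?deg3.
have /andP[/(constantP ord0)[a F_const] s_odd] : constant (map F s) && odd (size s).
  apply/negPn/negP => /(avoiding_cycle_coloring s_uniq)[h [h_avoid h_cycle]].
  have [_ not_3colorable] := critical.1; apply: not_3colorable.
  apply: (proper_coloring_glue e_sym (induced_cycle_coloring s_induced h_cycle) c_ok).
  by move=> x y; rewrite !inE => xs ys exy; rewrite -(F_ok x y) //; apply: h_avoid.
split=> //; exists c; split=> //; exists a => y.
rewrite inE => /andP[/existsP[x /andP[xs exy]] ys].
have /nseqP[Fx_a _] : F x \in nseq (size (map F s)) a by rewrite -F_const map_f.
by rewrite -(F_ok x y).
Qed.
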